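(* Let $n\ge 3$, let $F$ be a set of edges of $Q_n$, and let $T$ be a proper subset of the vertex set of $Q_n$ with $|T|\ge 3$ and $|T|_0\ge|T|_1$, such that every edge of $Q_n$ joining a vertex of parity 0 in $T$ to a vertex outside $T$ belongs to $F$. If the subgraph of $Q_n$ induced by $T$ is not connected, then $F$ is not minimal.
   Context: $Q_n$ is the $n$-dimensional hypercube on the binary strings of length $n$, two strings adjacent iff they differ in exactly one bit. The parity of a vertex is the number of ones in its label modulo 2. For a set $T$ of vertices, $|T|_0$ and $|T|_1$ denote the numbers of vertices of parity 0 and parity 1 in $T$. $F$ is a set of ''faulty'' edges; $Q_n-F$ is the graph with all vertices of $Q_n$ and the edges of $Q_n$ not in $F$. ''$F$ is not minimal'' means that there is a proper subset $F'\subsetneq F$ such that $Q_n-F'$ has no Hamiltonian cycle. *)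

From mathcomp Require Import all_boot.
Set Implicit Arguments. Unset Strict Implicit. Unset Printing Implicit Defensive.

Definition vtx (n : nat) := (n.-tuple bool : finType).

Definition qadj (n : nat) (u v : vtx n) : bool :=
  #|[set i : 'I_n | tnth u i != tnth v i]| == 1.

Definition parity (n : nat) (v : vtx n) : bool := odd (count id v).

Definition par0card (n : nat) (T : {set vtx n}) : nat := #|[set v in T | ~~ parity v]|.
Definition par1card (n : nat) (T : {set vtx n}) : nat := #|[set v in T | parity v]|.

(* Edges are represented as 2-element vertex sets {u, v}. *)
Definition is_edge_set (n : nat) (F : {set {set vtx n}}) : Prop :=
  forall e, e \in F -> exists u v : vtx n, qadj u v /\ e = [set u; v].

Definition adj_minus (n : nat) (F : {set {set vtx n}}) : rel (vtx n) :=
  fun u v => qadj u v && ([set u; v] \notin F).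

Definition hamiltonian (V : finType) (e : rel V) : Prop :=
  exists s : seq V, [/\ uniq s, size s = #|V| & cycle e s].

Definition not_minimal (n : nat) (F : {set {set vtx n}}) : Prop :=
  exists F' : {set {set vtx n}}, F' \proper F /\ ~ hamiltonian (adj_minus F').

Definition induced_adj (n : nat) (T : {set vtx n}) : rel (vtx n) :=
  fun u v => [&& u \in T, v \in T & qadj u v].

Definition induced_connected (n : nat) (T : {set vtx n}) : Prop :=
  forall x y, x \in T -> y \in T -> connect (induced_adj T) x y.

From mathcomp Require Import all_boot zify.
Set Implicit Arguments. Unset Strict Implicit. Unset Printing Implicit Defensive.

(* Let A be the component of a vertex in the subgraph induced by T, and
   B = T \ A.  No edge joins A to B, so every edge leaving A or B from an even
   vertex leaves T and lies in F, and |A|_1 + |B|_1 <= |A|_0 + |B|_0; say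
   |A|_1 <= |A|_0.  If a nonempty proper set X loses all edges leaving it from
   even vertices, both [next] and [prev] of a Hamiltonian cycle map the even
   vertices of X injectively to odd vertices of X, and |X|_0 = |X|_1 would make
   X closed under [next]; so |X|_0 < |X|_1.  Hence if such an edge of B exists,
   it is in F but not among those of A, and deleting only the edges of A
   already destroys all Hamiltonian cycles.  Otherwise the same count with
   coordinate flips instead of [next] gives |B|_0 < |B|_1, so |A|_1 < |A|_0.
   Then deleting any single edge ab of F still leaves no Hamiltonian cycle:
   ab can spoil [next] or [prev] at its even endpoint but not both, since
   next x <> prev x on a cycle through at least three vertices. *)

Lemma closed_connect_setT (V : finType) (e : rel V) (S : {set V}) :
  (forall x y, connect e x y) -> S != set0 ->
  (forall u v, u \in S -> e u v -> v \in S) -> S = setT.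
Proof.
move=> conn /set0Pn [x xS] closedS; apply/setP => y; rewrite inE.
have /connectP [p e_p ->] := conn x y.
by elim: p x xS e_p => //= z p IHp x xS /andP [e_xz /IHp]; apply; apply: closedS e_xz.
Qed.

Lemma card_sep_setD (V : finType) (P : pred V) (T A : {set V}) : A \subset T ->
  #|[set v in T | P v]| = #|[set v in A | P v]| + #|[set v in T :\: A | P v]|.
Proof.
move=> AT; rewrite -(cardsID A [set v in T | P v]); congr (_ + _); apply: eq_card => v.
  rewrite !inE; case vA: (v \in A); rewrite ?andbF ?andbT //.
  by rewrite (subsetP AT v vA).
by rewrite !inE andbA.
Qed.

Section HamiltonianCycle.
Variables (V : finType) (e : rel V) (s : seq V).
Hypotheses (s_uniq : uniq s) (s_size : size s = #|V|) (s_cycle : cycle e s).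

Lemma mem_hcycle x : x \in s.
Proof.
have /subset_cardP : #|s| = #|predT : pred V| by rewrite (card_uniqP s_uniq) s_size.
by move=> /(_ (subset_predT _)) ->.
Qed.

Lemma hcycle_next x : e x (next s x).
Proof. exact: next_cycle s_cycle (mem_hcycle x). Qed.

Lemma hcycle_prev x : e (prev s x) x.
Proof. exact: prev_cycle s_cycle (mem_hcycle x). Qed.

Lemma hcycle_connect x y : connect (frel (next s)) x y.
Proof. by rewrite (fconnect_cycle (cycle_next s_uniq) (mem_hcycle x)) mem_hcycle. Qed.

Lemma hcycle_next_neq_prev x : 2 < #|V| -> next s x != prev s x.
Proof.
apply: contraTneq => next_prev_x; rewrite -leqNgt.
have : [set x; next s x] = setT.
  apply: (closed_connect_setT hcycle_connect); first by apply/set0Pn; exists x; rewrite set21.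
  move=> u v /set2P [->|->] /eqP <-; first by rewrite set22.
  by rewrite {1}next_prev_x next_prev // set21.
by rewrite -cardsT => <-; rewrite cards2; case: (_ != _).
Qed.

End HamiltonianCycle.

Section Hypercube.
Variable n : nat.
Implicit Types (u v w x y : vtx n) (G : {set {set vtx n}}).

Definition flip (i : 'I_n) u : vtx n := [tuple tnth u j (+) (j == i) | j < n].

Lemma tnth_flip i u j : tnth (flip i u) j = tnth u j (+) (j == i).
Proof. by rewrite tnth_mktuple. Qed.

Lemma flipK i : involutive (flip i).
Proof. by move=> u; apply: eq_from_tnth => j; rewrite !tnth_flip -addbA addbb addbF. Qed.

Lemma flip_inj i : injective (flip i).
Proof. exact: can_inj (flipK i). Qed.

Lemma parity_flip i u : parity (flip i u) = ~~ parity u.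
Proof.
have count_tnth v : count id v = \sum_(j < n) nat_of_bool (tnth v j).
  by rewrite -sum1_count big_tuple big_mkcond; apply: eq_bigr => j _; case: (tnth v j).
rewrite /parity !count_tnth (bigD1 i) //= [in RHS](bigD1 i) //= !oddD !oddb tnth_flip eqxx.
rewrite addbT addNb; congr (~~ (_ (+) odd _)).
by apply: eq_bigr => j /negbTE j_neq_i; rewrite tnth_flip j_neq_i addbF.
Qed.

Lemma qadj_flip i u : qadj u (flip i u).
Proof.
apply/cards1P; exists i; apply/setP => j; rewrite !inE tnth_flip.
by case: (j == i); case: (tnth u j).
Qed.

Lemma qadjP u v : qadj u v -> exists i, v = flip i u.
Proof.
move=> /cards1P [i diff_i]; exists i; apply: eq_from_tnth => j.
have := congr1 (fun D : {set 'I_n} => j \in D) diff_i; rewrite /= !inE tnth_flip.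
by case: (j == i); case: (tnth u j); case: (tnth v j) => /= /eqP.
Qed.

Lemma qadj_sym u v : qadj u v = qadj v u.
Proof. by congr (_ == _); apply: eq_card => j; rewrite !inE eq_sym. Qed.

Lemma qadj_parity u v : qadj u v -> parity v = ~~ parity u.
Proof. by move=> /qadjP [i ->]; rewrite parity_flip. Qed.

Lemma qadj_neq u v : qadj u v -> u != v.
Proof. by move=> /qadj_parity; apply: contra_eqN => /eqP ->; case: parity. Qed.

Lemma even_endpoint_uniq u v w w' : qadj u v ->
  w \in [set u; v] -> w' \in [set u; v] -> ~~ parity w -> ~~ parity w' -> w = w'.
Proof.
move=> /qadj_parity par_v /set2P [] -> /set2P [] -> //; rewrite par_v;
by case: parity.
Qed.

Lemma hypercube_connect x y : connect (@qadj n) x y.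
Proof.
pose diff u := [set j | tnth u j != tnth y j].
have [k card_diff] : exists k, #|diff x| = k by eexists.
elim: k x card_diff => [|k IHk] x card_diff.
  suff -> : x = y by [].
  apply: eq_from_tnth => j; have /setP /(_ j) := cards0_eq card_diff.
  by rewrite !inE => /negbFE /eqP.
have /set0Pn [i diff_i] : diff x != set0 by rewrite -card_gt0 card_diff.
apply: connect_trans (connect1 (qadj_flip i x)) (IHk _ _).
have -> : diff (flip i x) = diff x :\ i.
  apply/setP => j; rewrite !inE tnth_flip; case: (eqVneq j i) => [-> | _]; last by rewrite addbF.
  by move: diff_i; rewrite inE; case: (tnth x i); case: (tnth y i).
by move: card_diff; rewrite (cardsD1 i) diff_i => -[].
Qed.

Lemma flip_closed_setT (S : {set vtx n}) : S != set0 ->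
  (forall i w, w \in S -> flip i w \in S) -> S = setT.
Proof.
move=> S_n0 flip_closed; apply: (closed_connect_setT hypercube_connect S_n0).
by move=> u v uS /qadjP [i ->]; apply: flip_closed.
Qed.

Definition even_boundary (X : {set vtx n}) : {set {set vtx n}} :=
  [set [set u; v] | u in [set u in X | ~~ parity u], v in [set v | (v \notin X) && qadj u v]].

Lemma mem_even_boundary (X : {set vtx n}) u v :
  u \in X -> ~~ parity u -> v \notin X -> qadj u v -> [set u; v] \in even_boundary X.
Proof. by move=> uX even_u vX uv; apply: imset2_f; rewrite !inE ?uX ?vX. Qed.

Lemma even_boundary_subset (X : {set vtx n}) G :
  (forall u v, u \in X -> ~~ parity u -> v \notin X -> qadj u v -> [set u; v] \in G) ->
  even_boundary X \subset G.
Proof.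
move=> boundaryG; apply/subsetP => e /imset2P [u v]; rewrite !inE.
by move=> /andP [uX even_u] /andP [vX uv] ->; apply: boundaryG.
Qed.

Definition qadj_closed_in (T A : {set vtx n}) :=
  forall u v, u \in A -> v \in T -> qadj u v -> v \in A.

Lemma qadj_closed_in_setD (T A : {set vtx n}) :
  qadj_closed_in T A -> qadj_closed_in T (T :\: A).
Proof.
move=> closedA u v /setDP [uT uA] vT uv; rewrite inE vT andbT.
by apply: contra uA => vA; apply: closedA vA uT _; rewrite qadj_sym.
Qed.

Lemma component_qadj_closed_in (T : {set vtx n}) x :
  qadj_closed_in T [set z in T | connect (induced_adj T) x z].
Proof.
move=> u v; rewrite !inE => /andP [uT xu] vT uv; rewrite vT.
by apply: connect_trans xu (connect1 _); rewrite /induced_adj uT vT uv.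
Qed.

Lemma even_boundary_sub (A T : {set vtx n}) : A \subset T -> qadj_closed_in T A ->
  even_boundary A \subset even_boundary T.
Proof.
move=> AT closedA; apply/subsetP => e /imset2P [u v]; rewrite !inE.
move=> /andP [uA even_u] /andP [vA uv] ->; apply: mem_even_boundary => //.
  exact: (subsetP AT).
by apply: contra vA => vT; apply: closedA uv.
Qed.

Lemma even_boundary_disjoint (X Y : {set vtx n}) e :
  [disjoint X & Y] -> e \in even_boundary X -> e \notin even_boundary Y.
Proof.
move=> disXY /imset2P [u v]; rewrite !inE => /andP [uX even_u] /andP [_ uv] ->.
apply/negP => /imset2P [u' v']; rewrite !inE => /andP [u'Y even_u'] /andP [_ u'v'] E.
have u_eq : u = u' by apply: (even_endpoint_uniq uv) => //;
  [exact: set21 | rewrite E set21].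
by move: (disjointFr disXY uX); rewrite u_eq u'Y.
Qed.

Definition even_stable (f : vtx n -> vtx n) (X : {set vtx n}) :=
  forall w, w \in X -> ~~ parity w -> f w \in X.

Lemma even_stable_of_edges (f : vtx n -> vtx n) (X : {set vtx n}) :
  (forall w, qadj w (f w)) -> (forall w, [set w; f w] \notin even_boundary X) ->
  even_stable f X.
Proof.
move=> f_adj f_out w wX even_w; apply: contraR (f_out w) => fwX.
exact: mem_even_boundary.
Qed.

Section EvenStable.
Variables (X : {set vtx n}) (f : vtx n -> vtx n).
Hypotheses (f_inj : injective f) (f_adj : forall w, qadj w (f w))
  (f_stable : even_stable f X).

Lemma even_stable_image :
  f @: [set v in X | ~~ parity v] \subset [set v in X | parity v].
Proof.
apply/subsetP => w /imsetP [u]; rewrite inE => /andP [uX even_u] ->.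
by rewrite inE f_stable // (qadj_parity (f_adj u)) even_u.
Qed.

Lemma even_stable_card_le : par0card X <= par1card X.
Proof. by have := subset_leq_card even_stable_image; rewrite card_imset. Qed.

(* In the balanced case [f] is a bijection from the even onto the odd
   vertices of [X], so any [g] undoing [f] maps odd vertices back into [X]. *)
Lemma even_stable_closed g : cancel f g -> even_stable g X ->
  par0card X = par1card X -> forall w, w \in X -> g w \in X.
Proof.
move=> fK g_stable balanced w wX; case: (boolP (parity w)) => [odd_w|]; last exact: g_stable.
have : w \in f @: [set v in X | ~~ parity v].
  have /eqP -> : f @: [set v in X | ~~ parity v] == [set v in X | parity v].
    by rewrite eqEcard even_stable_image card_imset // -/(par0card X) balanced leqnn.
  by rewrite inE wX.
by case/imsetP => u; rewrite inE => /andP [uX _] ->; rewrite fK.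
Qed.

End EvenStable.

Lemma even_closed_par0card_lt (X : {set vtx n}) : 0 < n ->
  X != set0 -> X \proper setT -> even_boundary X = set0 -> par0card X < par1card X.
Proof.
move=> n_gt0 X_n0 X_proper no_boundary.
have stable i : even_stable (flip i) X.
  by apply: even_stable_of_edges => [w|w]; rewrite ?qadj_flip ?no_boundary ?inE.
rewrite ltn_neqAle (even_stable_card_le (@flip_inj (Ordinal n_gt0)) (qadj_flip _) (stable _)).
rewrite andbT; apply/eqP => balanced; move: X_proper; rewrite properT => /eqP; apply.
apply: flip_closed_setT => // i.
exact: even_stable_closed (@flip_inj i) (qadj_flip i) (stable i) _ (flipK i) (stable i) balanced.
Qed.

Section CycleAvoiding.
Variables (G : {set {set vtx n}}) (s : seq (vtx n)).
Hypotheses (s_uniq : uniq s) (s_size : size s = #|vtx n|) (s_cycle : cycle (adj_minus G) s).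

Lemma hcycle_qadj_next w : qadj w (next s w).
Proof. by case/andP: (hcycle_next s_uniq s_size s_cycle w). Qed.

Lemma hcycle_qadj_prev w : qadj w (prev s w).
Proof. by rewrite qadj_sym; case/andP: (hcycle_prev s_uniq s_size s_cycle w). Qed.

Lemma hcycle_next_edge w : [set w; next s w] \notin G.
Proof. by case/andP: (hcycle_next s_uniq s_size s_cycle w). Qed.

Lemma hcycle_prev_edge w : [set w; prev s w] \notin G.
Proof. by rewrite setUC; case/andP: (hcycle_prev s_uniq s_size s_cycle w). Qed.

Lemma next_hcycle_inj : injective (next s).
Proof. exact: can_inj (prev_next s_uniq). Qed.

Lemma prev_hcycle_inj : injective (prev s).
Proof. exact: can_inj (next_prev s_uniq). Qed.

End CycleAvoiding.

Lemma hamiltonian_par0card_lt G (X : {set vtx n}) : hamiltonian (adj_minus G) ->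
  X != set0 -> X \proper setT -> even_boundary X \subset G -> par0card X < par1card X.
Proof.
move=> [s [s_uniq s_size s_cycle]] X_n0 X_proper boundaryG.
have avoid e : e \notin G -> e \notin even_boundary X by apply: contra => /(subsetP boundaryG).
have next_adj := hcycle_qadj_next s_uniq s_size s_cycle.
have prev_adj := hcycle_qadj_prev s_uniq s_size s_cycle.
have next_stable : even_stable (next s) X.
  by apply: (even_stable_of_edges next_adj) => w; apply: avoid (hcycle_next_edge s_uniq s_size s_cycle w).
have prev_stable : even_stable (prev s) X.
  by apply: (even_stable_of_edges prev_adj) => w; apply: avoid (hcycle_prev_edge s_uniq s_size s_cycle w).
have prev_inj := prev_hcycle_inj s_uniq.
rewrite ltn_neqAle (even_stable_card_le prev_inj prev_adj prev_stable) andbT.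
apply/eqP => balanced; move: X_proper; rewrite properT => /eqP; apply.
apply: (closed_connect_setT (hcycle_connect s_uniq s_size)) X_n0 _ => u v uX /eqP <-.
exact: even_stable_closed prev_inj prev_adj prev_stable _ (next_prev s_uniq) next_stable balanced u uX.
Qed.

Lemma hamiltonian_delete_par0card_le G (X : {set vtx n}) a b : 2 < #|vtx n| ->
  qadj a b -> even_boundary X \subset G ->
  hamiltonian (adj_minus (G :\ [set a; b])) -> par0card X <= par1card X.
Proof.
move=> V_gt2 ab boundaryG [s [s_uniq s_size s_cycle]].
have used_edge e : e \notin G :\ [set a; b] -> e \in even_boundary X -> e = [set a; b].
  by move=> + /(subsetP boundaryG) eG; rewrite !inE eG andbT negbK => /eqP.
have next_adj := hcycle_qadj_next s_uniq s_size s_cycle.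
have prev_adj := hcycle_qadj_prev s_uniq s_size s_cycle.
have next_edge := hcycle_next_edge s_uniq s_size s_cycle.
have prev_edge := hcycle_prev_edge s_uniq s_size s_cycle.
case: (pickP [pred w | [&& w \in X, ~~ parity w & next s w \notin X]]) => [w /= | stay]; last first.
  apply: (even_stable_card_le (next_hcycle_inj s_uniq) next_adj) => w wX even_w.
  by have /= := stay w; rewrite wX even_w => /negbFE.
case/and3P => wX even_w next_out.
case: (pickP [pred w | [&& w \in X, ~~ parity w & prev s w \notin X]]) => [w' /= | stay]; last first.
  apply: (even_stable_card_le (prev_hcycle_inj s_uniq) prev_adj) => w' w'X even_w'.
  by have /= := stay w'; rewrite w'X even_w' => /negbFE.
case/and3P => w'X even_w' prev_out.
have next_e := used_edge _ (next_edge w) (mem_even_boundary wX even_w next_out (next_adj w)).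
have prev_e := used_edge _ (prev_edge w') (mem_even_boundary w'X even_w' prev_out (prev_adj w')).
have ww' : w = w'.
  apply: (even_endpoint_uniq ab) => //; [rewrite -next_e | rewrite -prev_e]; exact: set21.
have : next s w \in [set w; prev s w] by rewrite ww' prev_e -ww' -next_e set22.
rewrite !inE eq_sym (negbTE (qadj_neq (next_adj w))) orFb => /eqP next_prev_w.
by move: (hcycle_next_neq_prev s_uniq s_size w V_gt2); rewrite next_prev_w eqxx.
Qed.

Lemma not_minimal_of_separated F (X Y : {set vtx n}) : 2 <= n -> is_edge_set F ->
  [disjoint X & Y] -> X != set0 -> Y != set0 -> X \proper setT -> Y \proper setT ->
  even_boundary X \subset F -> even_boundary Y \subset F ->
  par1card X + par1card Y <= par0card X + par0card Y -> not_minimal F.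
Proof.
move=> n_ge2 edgesF; have n_gt0 : 0 < n by apply: leq_trans n_ge2.
have V_gt2 : 2 < #|vtx n|.
  by rewrite card_tuple card_bool; apply: leq_trans (leq_pexp2l (isT : 0 < 2) n_ge2).
wlog le_X : X Y / par1card X <= par0card X.
  move=> wlog disXY X_n0 Y_n0 X_proper Y_proper bX bY total.
  case: (leqP (par1card X) (par0card X)) => [le_X | lt_X]; first exact: (wlog X Y).
  by apply: (wlog Y X); rewrite 1?disjoint_sym //; lia.
move=> disXY X_n0 Y_n0 X_proper Y_proper bX bY total.
case: (set_0Vmem (even_boundary Y)) => [Y_closed | [e eY]]; last first.
  exists (even_boundary X); split; last first.
    by move=> ham; have := hamiltonian_par0card_lt ham X_n0 X_proper (subxx _); lia.
  apply/properP; split => //; exists e; first exact: (subsetP bY).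
  by rewrite disjoint_sym in disXY; apply: even_boundary_disjoint disXY eY.
have := even_closed_par0card_lt n_gt0 Y_n0 Y_proper Y_closed => lt_Y.
case: (set_0Vmem F) => [F0 | [f fF]].
  have X_closed : even_boundary X = set0 by apply/eqP; rewrite -subset0 -F0.
  by have := even_closed_par0card_lt n_gt0 X_n0 X_proper X_closed; lia.
have [a [b [ab f_ab]]] := edgesF f fF.
exists (F :\ f); split; first exact: properD1.
by rewrite f_ab => ham; have := hamiltonian_delete_par0card_le V_gt2 ab bX ham; lia.
Qed.

End Hypercube.

Theorem lemma4 (n : nat) (F : {set {set vtx n}}) (T : {set vtx n}) :
  3 <= n ->
  is_edge_set F ->
  T \proper [set: vtx n] ->
  3 <= #|T| ->
  par1card T <= par0card T ->
  (forall u v : vtx n, u \in T -> ~~ parity u -> v \notin T -> qadj u v ->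
     [set u; v] \in F) ->
  ~ induced_connected T ->
  not_minimal F.
Proof.
move=> n_ge3 edgesF T_proper _ T_balanced T_boundary T_disconnected.
case: (pickP [pred xy : vtx n * vtx n |
    [&& xy.1 \in T, xy.2 \in T & ~~ connect (induced_adj T) xy.1 xy.2]]); last first.
  move=> connected; case: T_disconnected => x y xT yT.
  by have /= := connected (x, y); rewrite xT yT => /negbFE.
move=> [x y] /and3P [/= xT yT not_xy].
pose A := [set z in T | connect (induced_adj T) x z].
have AT : A \subset T by apply/subsetP => z; rewrite inE => /andP [].
have A_closed : qadj_closed_in T A by exact: component_qadj_closed_in.
have boundaryF := even_boundary_subset T_boundary.
apply: (@not_minimal_of_separated _ _ A (T :\: A)) => //.
- exact: ltnW.
- by rewrite disjoints_subset setDE setCI setCK subsetUr.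
- by apply/set0Pn; exists x; rewrite inE xT connect0.
- by apply/set0Pn; exists y; rewrite !inE yT not_xy.
- exact: sub_proper_trans AT T_proper.
- exact: sub_proper_trans (subsetDl T A) T_proper.
- exact: subset_trans (even_boundary_sub AT A_closed) boundaryF.
- exact: subset_trans (even_boundary_sub (subsetDl T A) (qadj_closed_in_setD A_closed)) boundaryF.
- by rewrite /par1card /par0card -!(card_sep_setD _ AT).
Qed.
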